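(* If a Möbius transformation of $\mathcal A_2^{(0,1)}\cup\{\infty\}$ fixes each of $-e_2$, $e_2$, $0$ and $\infty$, then its Vahlen matrices are of the form $\pm\begin{pmatrix}a&0\\0&a^{-1}\end{pmatrix}$ with $a\in\mathbb R+\mathbb Re_1$ and $|a|=1$.
   Context: $\mathcal A_2$ is the real associative algebra generated by $e_1,e_2$ with $e_1^2=e_2^2=-1$, $e_1e_2=-e_2e_1$; for $a=a_0+a_1e_1+a_2e_2+a_{12}e_1e_2$, $|a|^2=a_0^2+a_1^2+a_2^2+a_{12}^2$ and $a^*=a_0+a_1e_1+a_2e_2-a_{12}e_1e_2$. $\mathcal A_2^{(0,1)}=\mathbb R+\mathbb Re_1+\mathbb Re_2$. A Vahlen matrix is $\begin{pmatrix}a&b\\c&d\end{pmatrix}$ with $a,b,c,d\in\mathcal A_2$, $ad^*-bc^*=1$ and $ab^*,cd^*\in\mathcal A_2^{(0,1)}$; it acts by $x\mapsto(ax+b)(cx+d)^{-1}$, $\infty\mapsto ac^{-1}$. The Möbius transformations of $\mathcal A_2^{(0,1)}\cup\{\infty\}$ are exactly these maps, each given by exactly two Vahlen matrices $\pm A$. *)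

(* The Clifford algebra A_2 (= Hamilton quaternions with
   e1 = i, e2 = j, e1 e2 = k) over a real closed field R. *)
From HB Require Import structures.
From mathcomp Require Import all_boot all_order all_algebra.
Set Implicit Arguments. Unset Strict Implicit. Unset Printing Implicit Defensive.
Import Order.TTheory GRing.Theory Num.Theory.
Local Open Scope ring_scope.

(* a = q0 + q1 e1 + q2 e2 + q12 e1e2 *)
Record A2 (R : rcfType) := MkA2 { q0 : R; q1 : R; q2 : R; q12 : R }.

Section A2ops.
Variable R : rcfType.
Implicit Types x y : A2 R.

Definition a2zero : A2 R := MkA2 0 0 0 0.
Definition a2one : A2 R := MkA2 1 0 0 0.
Definition a2e1 : A2 R := MkA2 0 1 0 0.
Definition a2e2 : A2 R := MkA2 0 0 1 0.

Definition a2add x y : A2 R :=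
  MkA2 (q0 x + q0 y) (q1 x + q1 y) (q2 x + q2 y) (q12 x + q12 y).
Definition a2opp x : A2 R := MkA2 (- q0 x) (- q1 x) (- q2 x) (- q12 x).
Definition a2sub x y := a2add x (a2opp y).
Definition a2scale (r : R) x : A2 R :=
  MkA2 (r * q0 x) (r * q1 x) (r * q2 x) (r * q12 x).

(* product determined by e1^2 = e2^2 = -1, e1 e2 = - e2 e1 *)
Definition a2mul x y : A2 R :=
  MkA2 (q0 x * q0 y - q1 x * q1 y - q2 x * q2 y - q12 x * q12 y)
       (q0 x * q1 y + q1 x * q0 y + q2 x * q12 y - q12 x * q2 y)
       (q0 x * q2 y - q1 x * q12 y + q2 x * q0 y + q12 x * q1 y)
       (q0 x * q12 y + q1 x * q2 y - q2 x * q1 y + q12 x * q0 y).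

Definition a2normsq x : R := q0 x ^+ 2 + q1 x ^+ 2 + q2 x ^+ 2 + q12 x ^+ 2.
Definition a2norm x : R := Num.sqrt (a2normsq x).

(* the involution a^* of the paper (reversion) *)
Definition a2star x : A2 R := MkA2 (q0 x) (q1 x) (q2 x) (- q12 x).

(* Clifford conjugate a-bar (negates e1, e2, e1e2); a a-bar = |a|^2 *)
Definition a2bar x : A2 R := MkA2 (q0 x) (- q1 x) (- q2 x) (- q12 x).

(* multiplicative inverse a^{-1} = a-bar / |a|^2 (equal to 0 for a = 0,
   never used there) *)
Definition a2inv x : A2 R := a2scale (a2normsq x)^-1 (a2bar x).

(* membership in A_2^{(0,1)} = R + R e1 + R e2 *)
Definition in_A2_01 x : Prop := q12 x = 0.

Definition vahlen (a b c d : A2 R) : Prop :=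
  a2sub (a2mul a (a2star d)) (a2mul b (a2star c)) = a2one /\
  in_A2_01 (a2mul a (a2star b)) /\ in_A2_01 (a2mul c (a2star d)).

(* Action on A_2^{(0,1)} u {oo}, with None = oo:
   x |-> (a x + b)(c x + d)^{-1}  (oo if c x + d = 0),  oo |-> a c^{-1} (oo if c = 0) *)
Definition mobius_act (a b c d : A2 R) (p : option (A2 R)) : option (A2 R) :=
  match p with
  | Some x =>
      let den := a2add (a2mul c x) d in
      if a2normsq den == 0 then None
      else Some (a2mul (a2add (a2mul a x) b) (a2inv den))
  | None => if a2normsq c == 0 then None else Some (a2mul a (a2inv c))
  end.

End A2ops.

(* A transformation fixing oo has c = 0, and then fixing 0 forces b = 0.
   The Vahlen condition reduces to a d^* = 1, while fixing e2 says
   a e2 = e2 d, i.e. d is the conjugate of a by e2.  Substituting the second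
   relation into the first, the e2- and e1e2-components of a d^* give a
   linear system in (q2 a, q12 a) whose determinant is q0 a^2 + q1 a^2, which
   the scalar component shows to be nonzero; hence a is in R + R e1, and then
   a d^* = 1 says |a| = 1 and d = a^{-1}. *)
From mathcomp Require Import all_boot all_order all_algebra.
From mathcomp Require Import ring lra.
Set Implicit Arguments. Unset Strict Implicit. Unset Printing Implicit Defensive.
Import Order.TTheory GRing.Theory Num.Theory.
Local Open Scope ring_scope.

Section A2Algebra.
Variable R : rcfType.
Implicit Types x y z : A2 R.

Lemma a2mulA x y z : a2mul (a2mul x y) z = a2mul x (a2mul y z).
Proof.
by case: x => ????; case: y => ????; case: z => ????; congr MkA2 => /=; ring.
Qed.

Lemma a2mul0l x : a2mul (a2zero R) x = a2zero R.
Proof. by case: x => ????; congr MkA2 => /=; ring. Qed.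

Lemma a2mul0r x : a2mul x (a2zero R) = a2zero R.
Proof. by case: x => ????; congr MkA2 => /=; ring. Qed.

Lemma a2mulr1 x : a2mul x (a2one R) = x.
Proof. by case: x => ????; congr MkA2 => /=; ring. Qed.

Lemma a2add0l x : a2add (a2zero R) x = x.
Proof. by case: x => ????; congr MkA2 => /=; ring. Qed.

Lemma a2addr0 x : a2add x (a2zero R) = x.
Proof. by case: x => ????; congr MkA2 => /=; ring. Qed.

Lemma a2subr0 x : a2sub x (a2zero R) = x.
Proof. by case: x => ????; congr MkA2 => /=; ring. Qed.

Lemma a2mulVl x : a2normsq x != 0 -> a2mul (a2inv x) x = a2one R.
Proof.
by case: x => ????; rewrite /a2inv /a2normsq /= => nz; congr MkA2 => /=; field.
Qed.

Lemma a2normsq_eq0 x : a2normsq x = 0 -> x = a2zero R.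
Proof.
case: x => x0 x1 x2 x3; rewrite /a2normsq /= => h.
have sq0 (r : R) : r ^+ 2 = 0 -> r = 0 by move/eqP; rewrite sqrf_eq0 => /eqP.
by congr MkA2; apply: sq0; nra.
Qed.

Lemma a2norm_eq1 x : a2normsq x = 1 -> a2norm x = 1.
Proof. by rewrite /a2norm => ->; rewrite sqrtr1. Qed.

End A2Algebra.

Section MobiusFixedPoints.
Variable R : rcfType.
Implicit Types a b c d x y : A2 R.

Lemma mobius_fix_infty a b c d : mobius_act a b c d None = None -> c = a2zero R.
Proof. by rewrite /mobius_act; case: eqP => // /a2normsq_eq0. Qed.

Lemma mobius_act_SomeE a b c d x y :
  mobius_act a b c d (Some x) = Some y ->
  a2normsq (a2add (a2mul c x) d) != 0 /\
  a2add (a2mul a x) b = a2mul y (a2add (a2mul c x) d).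
Proof.
rewrite /mobius_act; case: eqP => // /eqP nz [<-]; split=> //.
by rewrite a2mulA a2mulVl // a2mulr1.
Qed.

Lemma mobius_fix_zero a b d :
  mobius_act a b (a2zero R) d (Some (a2zero R)) = Some (a2zero R) ->
  b = a2zero R.
Proof. by case/mobius_act_SomeE => _; rewrite !a2mul0r !a2add0l a2mul0l. Qed.

Lemma mobius_fix_e2 a d :
  mobius_act a (a2zero R) (a2zero R) d (Some (a2e2 R)) = Some (a2e2 R) ->
  a2mul a (a2e2 R) = a2mul (a2e2 R) d.
Proof. by case/mobius_act_SomeE => _; rewrite a2mul0l a2add0l a2addr0. Qed.

Lemma diag_vahlen_fix_e2 a d :
  a2mul a (a2star d) = a2one R -> a2mul a (a2e2 R) = a2mul (a2e2 R) d ->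
  [/\ q2 a = 0, q12 a = 0, a2normsq a = 1 & d = a2inv a].
Proof.
case: a d => a0 a1 a2 a3 [d0 d1 d2 d3] [v0 v1 v2 v3] [e0 e1 e2 e3] /=.
have d0E : d0 = a0 by lra.
have d1E : d1 = - a1 by lra.
have d2E : d2 = a2 by lra.
have d3E : d3 = - a3 by lra.
subst d0 d1 d2 d3.
have n0 : a0 ^+ 2 + a1 ^+ 2 - a2 ^+ 2 - a3 ^+ 2 = 1 by rewrite -v0; ring.
have pos : a0 ^+ 2 + a1 ^+ 2 != 0 by apply/eqP => h; nra.
have cancel_pos (r : R) : (a0 ^+ 2 + a1 ^+ 2) * r = 0 -> r = 0.
  by move/eqP; rewrite mulf_eq0 (negbTE pos) => /eqP.
have s2 : a0 * a2 - a1 * a3 = 0 by lra.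
have s3 : a0 * a3 + a1 * a2 = 0 by lra.
have a2_0 : a2 = 0.
  apply: cancel_pos.
  have -> : (a0 ^+ 2 + a1 ^+ 2) * a2 =
            a0 * (a0 * a2 - a1 * a3) + a1 * (a0 * a3 + a1 * a2) by ring.
  by rewrite s2 s3; ring.
have a3_0 : a3 = 0.
  apply: cancel_pos.
  have -> : (a0 ^+ 2 + a1 ^+ 2) * a3 =
            a0 * (a0 * a3 + a1 * a2) - a1 * (a0 * a2 - a1 * a3) by ring.
  by rewrite s2 s3; ring.
subst a2 a3.
have n1 : a2normsq (MkA2 a0 a1 0 0) = 1 by rewrite /a2normsq /= -n0; ring.
split=> //; rewrite /a2inv n1 invr1; congr MkA2 => /=; ring.
Qed.

End MobiusFixedPoints.

Theorem proposition3p4 (R : rcfType) (a b c d : A2 R) :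
  vahlen a b c d ->
  mobius_act a b c d (Some (a2opp (a2e2 R))) = Some (a2opp (a2e2 R)) ->
  mobius_act a b c d (Some (a2e2 R)) = Some (a2e2 R) ->
  mobius_act a b c d (Some (a2zero R)) = Some (a2zero R) ->
  mobius_act a b c d None = None ->
  exists u : A2 R,
    q2 u = 0 /\ q12 u = 0 /\ a2norm u = 1 /\
    ((a = u /\ b = a2zero R /\ c = a2zero R /\ d = a2inv u) \/
     (a = a2opp u /\ b = a2zero R /\ c = a2zero R /\ d = a2opp (a2inv u))).
Proof.
move=> [det _] _ fix_e2 fix_0 /mobius_fix_infty c0; subst c.
have b0 := mobius_fix_zero fix_0; subst b.
rewrite a2mul0l a2subr0 in det.
have [a2_0 a12_0 na da] := diag_vahlen_fix_e2 det (mobius_fix_e2 fix_e2).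
by exists a; do 3!split=> //; [exact: a2norm_eq1 | left].
Qed.
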